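(* Let $N\ge2$ and $\nu_1,\dots,\nu_N\in\mathcal{M}_h\cap\Delta$. Let $\boldsymbol{\sigma}=(\boldsymbol{\sigma}_1,\dots,\boldsymbol{\sigma}_N)\in\mathcal{S}_h^N$ and $\nu\in\mathcal{M}_h\cap\Delta$. Then each equation $-\Delta_h\xi_i'=\mathrm{div}_h\boldsymbol{\sigma}_i+\nu_i-\nu$ ($i=1,\dots,N$) admits a solution, and for any choice of such solutions $\xi_1',\dots,\xi_N'$, the Euclidean projection $(\widetilde{\boldsymbol{\sigma}},\widetilde\nu)$ of $(\boldsymbol{\sigma},\nu)$ onto $$\mathcal{F}_h=\{(\boldsymbol{\sigma}_1,\dots,\boldsymbol{\sigma}_N,\mu)\in\mathcal{S}_h^N\times\mathcal{M}_h:\mathrm{div}_h\boldsymbol{\sigma}_k+\nu_k=\mu\ \forall k\}$$ is given by $\widetilde{\boldsymbol{\sigma}}_i=\boldsymbol{\sigma}_i+\nabla_h\xi_i$ and $\widetilde\nu=\nu+\xi_1+\dots+\xi_N$, where $\xi_i=\xi_i'-(I-\tfrac1N\Delta_h)^{-1}\big(\tfrac1N\sum_{j=1}^N\xi_j'\big)$.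
   Context: Grid $\mathcal{G}_h=\{hi:i=1,\dots,p\}^2$ with $h=1/p$; $\mathcal{M}_h=\{\mu:\mathcal{G}_h\to\mathbb{R}\}\cong\mathbb{R}^{p^2}$, $\mathcal{S}_h=\{\boldsymbol{\sigma}:\mathcal{G}_h\to\mathbb{R}^2\}\cong\mathbb{R}^{p^2\times2}$, both with the standard $\ell^2$ inner products (and the product inner product on $\mathcal{S}_h^N\times\mathcal{M}_h$, with respect to which the projection is taken). $\Delta\subset\mathcal{M}_h$ is the unit simplex (nonnegative entries summing to 1). $\nabla_h:\mathcal{M}_h\to\mathcal{S}_h$ is the discrete gradient by forward differences with homogeneous Neumann boundary conditions: $(\nabla_hu)_{i,j}=(u_{i+1,j}-u_{i,j},\,u_{i,j+1}-u_{i,j})$, where a difference is set to $0$ when $i=p$ (resp. $j=p$); its kernel is the constants. $\mathrm{div}_h=-\nabla_h^*$ and $\Delta_h=\mathrm{div}_h\nabla_h$. *)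

From mathcomp Require Import all_boot all_order all_algebra.
From mathcomp Require Import reals.
Set Implicit Arguments. Unset Strict Implicit. Unset Printing Implicit Defensive.
Import Order.TTheory GRing.Theory Num.Theory.
Local Open Scope ring_scope.

(* Grid G_h = {h i : i = 1..p}^2 is indexed by 'I_p * 'I_p (index i <-> i+1).
   M_h := 'M[R]_p  (scalar grid functions),
   S_h := 'M[R]_p * 'M[R]_p  (vector fields: (x-component, y-component)). *)

Definition Sh (R : realType) (p : nat) := ('M[R]_p * 'M[R]_p)%type.

Definition dotM (R : realType) (p : nat) (u v : 'M[R]_p) : R :=
  \sum_(i < p) \sum_(j < p) u i j * v i j.
Definition dotS (R : realType) (p : nat) (s t : Sh R p) : R :=
  dotM s.1 t.1 + dotM s.2 t.2.

Definition addS (R : realType) (p : nat) (s t : Sh R p) : Sh R p :=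
  (s.1 + t.1, s.2 + t.2).
Definition subS (R : realType) (p : nat) (s t : Sh R p) : Sh R p :=
  (s.1 - t.1, s.2 - t.2).

(* Forward differences with homogeneous Neumann BC: difference is 0 on the
   last row/column (index p-1, i.e. i = p in the paper's 1-based indexing).
   When i.+1 < p, ordS i has value i.+1. *)
Definition gradh (R : realType) (p : nat) (u : 'M[R]_p) : Sh R p :=
  (\matrix_(i < p, j < p) (if (i.+1 < p)%N then u (ordS i) j - u i j else 0),
   \matrix_(i < p, j < p) (if (j.+1 < p)%N then u i (ordS j) - u i j else 0)).

(* div_h = - grad_h^* , with the adjoint taken w.r.t. the l^2 inner products:
   (grad_h^* s)_{ij} = <s, grad_h e_{ij}>. *)
Definition divh (R : realType) (p : nat) (s : Sh R p) : 'M[R]_p :=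
  \matrix_(i < p, j < p) - dotS s (gradh (delta_mx i j)).

Definition laph (R : realType) (p : nat) (u : 'M[R]_p) : 'M[R]_p :=
  divh (gradh u).

Definition in_simplex (R : realType) (p : nat) (mu : 'M[R]_p) : Prop :=
  (forall i j, 0 <= mu i j) /\ \sum_(i < p) \sum_(j < p) mu i j = 1.

Definition Fh (R : realType) (p N : nat) (nus : 'I_N -> 'M[R]_p)
  (x : ('I_N -> Sh R p) * 'M[R]_p) : Prop :=
  forall k : 'I_N, divh (x.1 k) + nus k = x.2.

Definition sqdist (R : realType) (p N : nat)
  (x y : ('I_N -> Sh R p) * 'M[R]_p) : R :=
  \sum_(k < N) dotS (subS (x.1 k) (y.1 k)) (subS (x.1 k) (y.1 k))
  + dotM (x.2 - y.2) (x.2 - y.2).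

Definition is_proj (R : realType) (p N : nat)
  (F : ('I_N -> Sh R p) * 'M[R]_p -> Prop)
  (x y : ('I_N -> Sh R p) * 'M[R]_p) : Prop :=
  F y /\ forall z, F z -> sqdist x y <= sqdist x z.

(* The normal space of the affine set F_h consists of the vectors
   (grad_h xi_1, ..., grad_h xi_N, xi_1 + ... + xi_N): indeed, as div_h = -grad_h^*,
   for (s, m) in the direction of F_h (div_h s_k = m for all k) the pairing is
   <sum_k xi_k, m> - sum_k <m, xi_k> = 0.  Hence a point of F_h whose difference with
   (sigma, nu) is such a vector is the projection, by Pythagoras.  The proposed point
   has this form and lies in F_h: summing the N Poisson equations and using the
   definition of zeta gives xi_1 + ... + xi_N = -lap_h zeta, while
   div_h (sigma_k + grad_h xi_k) + nu_k = nu - lap_h zeta for every k.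
   Solvability: -lap_h is symmetric nonnegative with the constants as kernel, so
   -lap_h + <., 1> 1 and I - c lap_h (c >= 0) are injective, hence onto; the data of
   the Poisson equations have zero mean because nu_k and nu are probability vectors. *)

From HB Require Import structures.
From mathcomp Require Import all_boot all_order all_algebra.
From mathcomp Require Import reals ring.
Set Implicit Arguments. Unset Strict Implicit. Unset Printing Implicit Defensive.
Import Order.TTheory GRing.Theory Num.Theory.
Local Open Scope ring_scope.

Lemma linear_inj_surj (K : fieldType) (vT : vectType K) (f : vT -> vT) :
  linear f -> (forall u, f u = 0 -> u = 0) -> forall v, exists u, f u = v.
Proof.
move=> f_lin f_ker0 v.
pose fL := HB.pack_for {linear vT -> vT} f (GRing.isLinear.Build K vT vT _ f f_lin).
have ker0 : lker (linfun fL) == 0%VS.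
  apply/lker0P => x y; rewrite !lfunE => /eqP; rewrite -subr_eq0 -linearB.
  by move=> /eqP/f_ker0/eqP; rewrite subr_eq0 => /eqP.
by exists ((linfun fL)^-1%VF v); rewrite -[f _](lfunE fL) lker0_lfunVK.
Qed.

Lemma ordS_invariant_const (T : Type) n (w : 'I_n -> T) :
  (forall i : 'I_n, (i.+1 < n)%N -> w (ordS i) = w i) -> forall i j, w i = w j.
Proof.
move=> wS i j; have n_gt0 : (0 < n)%N := leq_ltn_trans (leq0n _) (ltn_ord i).
suff w0 k : w k = w (Ordinal n_gt0) by rewrite !w0.
case: k => k; elim: k => [|k IHk] lt_k_n; first by congr w; apply: val_inj.
rewrite -(IHk (ltnW lt_k_n)) -(wS (Ordinal (ltnW lt_k_n)) lt_k_n).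
by congr w; apply: val_inj; rewrite /= modn_small.
Qed.

Section GridCalculus.
Variables (R : realType) (p : nat).
Implicit Types (u v : 'M[R]_p) (s t : Sh R p).

Lemma dotM_is_bilinear : bilinear_for
  (GRing.Scale.Law.clone _ _ *%R _) (GRing.Scale.Law.clone _ _ *%R _) (@dotM R p).
Proof.
split=> [u|u] a v w /=; rewrite /dotM mulr_sumr -big_split /=; apply: eq_bigr => i _;
  rewrite mulr_sumr -big_split /=; apply: eq_bigr => j _; rewrite !mxE; ring.
Qed.
HB.instance Definition _ :=
  bilinear_isBilinear.Build R 'M[R]_p 'M[R]_p R _ _ (@dotM R p) dotM_is_bilinear.

Lemma dotS_is_bilinear : bilinear_for
  (GRing.Scale.Law.clone _ _ *%R _) (GRing.Scale.Law.clone _ _ *%R _) (@dotS R p).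
Proof. by split=> [s|s] a t r; rewrite /dotS /= ?linearPl ?linearPr /=; ring. Qed.
HB.instance Definition _ :=
  bilinear_isBilinear.Build R (Sh R p) (Sh R p) R _ _ (@dotS R p) dotS_is_bilinear.

Lemma dotMC u v : dotM u v = dotM v u.
Proof. by apply: eq_bigr => i _; apply: eq_bigr => j _; rewrite mulrC. Qed.

Lemma dotSC s t : dotS s t = dotS t s.
Proof. by rewrite /dotS dotMC [dotM s.2 _]dotMC. Qed.

Lemma dotM_ge0 u : 0 <= dotM u u.
Proof. by apply: sumr_ge0 => i _; apply: sumr_ge0 => j _; apply: sqr_ge0. Qed.

Lemma dotS_ge0 s : 0 <= dotS s s.
Proof. by rewrite addr_ge0 ?dotM_ge0. Qed.

Lemma dotM_eq0 u : dotM u u = 0 -> u = 0.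
Proof.
move=> /eqP; rewrite psumr_eq0 => [/allP u0|i _]; last first.
  by apply: sumr_ge0 => j _; apply: sqr_ge0.
apply/matrixP => i j; move/(_ i (mem_index_enum _)): u0.
rewrite psumr_eq0 => [/allP/(_ j (mem_index_enum _))|k _]; last exact: sqr_ge0.
by rewrite mulf_eq0 orbb mxE => /eqP.
Qed.

Lemma dotS_eq0 s : dotS s s = 0 -> s = 0.
Proof.
move=> /eqP; rewrite paddr_eq0 ?dotM_ge0 // => /andP[/eqP/dotM_eq0 s1 /eqP/dotM_eq0 s2].
by case: s s1 s2 => /= ? ? -> ->.
Qed.

Lemma dotM_simplex1 (mu : 'M[R]_p) : in_simplex mu -> dotM mu (const_mx 1) = 1.
Proof.
case=> _ mu1; rewrite -[RHS]mu1.
by apply: eq_bigr => i _; apply: eq_bigr => j _; rewrite mxE mulr1.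
Qed.

Lemma dotM_const_mx1 (c : R) : dotM (const_mx c : 'M[R]_p) (const_mx 1) = c *+ (p * p).
Proof.
rewrite /dotM (eq_bigr (fun=> c *+ p)) ?sumr_const ?card_ord ?mulrnA // => i _.
by rewrite (eq_bigr (fun=> c)) ?sumr_const ?card_ord // => j _; rewrite !mxE mulr1.
Qed.

Lemma gradh_is_linear : linear (@gradh R p).
Proof.
move=> a u v; congr pair; apply/matrixP => i j; rewrite !mxE.
  by case: ifP => _; rewrite ?mxE; ring.
by case: ifP => _; rewrite ?mxE; ring.
Qed.
HB.instance Definition _ :=
  GRing.isLinear.Build R 'M[R]_p (Sh R p) _ (@gradh R p) gradh_is_linear.

Lemma divh_is_linear : linear (@divh R p).
Proof. by move=> a s t; apply/matrixP => i j; rewrite !mxE linearPl /=; ring. Qed.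
HB.instance Definition _ :=
  GRing.isLinear.Build R (Sh R p) 'M[R]_p _ (@divh R p) divh_is_linear.

Lemma laph_is_linear : linear (@laph R p).
Proof. by move=> a u v; rewrite /laph !linearP. Qed.
HB.instance Definition _ :=
  GRing.isLinear.Build R 'M[R]_p 'M[R]_p _ (@laph R p) laph_is_linear.

Lemma gradh_const c : gradh (const_mx c : 'M[R]_p) = 0.
Proof. by congr pair; apply/matrixP => i j; rewrite !mxE; case: ifP; rewrite ?mxE ?subrr. Qed.

Lemma divh_adjoint s u : dotM (divh s) u = - dotS s (gradh u).
Proof.
rewrite {2}[u]matrix_sum_delta linear_sum /= linear_sumr /dotM -sumrN.
apply: eq_bigr => i _; rewrite linear_sum /= linear_sumr -sumrN; apply: eq_bigr => j _.
by rewrite linearZ linearZr_LR /= !mxE mulNr mulrC.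
Qed.

Lemma laph_adjoint u v : dotM (laph u) v = - dotS (gradh u) (gradh v).
Proof. exact: divh_adjoint. Qed.

Lemma dotM_divh_const s (c : R) : dotM (divh s) (const_mx c) = 0.
Proof. by rewrite divh_adjoint gradh_const linear0r oppr0. Qed.

Lemma gradh_eq0_const u : gradh u = 0 -> forall i j, u = const_mx (u i j).
Proof.
move=> grad0.
have ux (i j : 'I_p) : (i.+1 < p)%N -> u (ordS i) j = u i j.
  move=> lt_ip; move/(congr1 fst)/matrixP/(_ i j): grad0.
  by rewrite !mxE lt_ip => /eqP; rewrite subr_eq0 => /eqP.
have uy (i j : 'I_p) : (j.+1 < p)%N -> u i (ordS j) = u i j.
  move=> lt_jp; move/(congr1 snd)/matrixP/(_ i j): grad0.
  by rewrite !mxE lt_jp => /eqP; rewrite subr_eq0 => /eqP.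
move=> i j; apply/matrixP => k l; rewrite mxE.
rewrite (ordS_invariant_const (w := u^~ l) (ux^~ l) k i).
exact: (ordS_invariant_const (uy i)).
Qed.

Lemma neumann_poisson_solvable (p_gt0 : (0 < p)%N) f :
  dotM f (const_mx 1) = 0 -> exists u, - laph u = f.
Proof.
move=> f_mean0.
pose A u := - laph u + dotM u (const_mx 1) *: const_mx 1.
have A_lin : linear A.
  by move=> a u v; rewrite /A linearP linearPl; apply/matrixP => i j; rewrite !mxE /=; ring.
have A_ker0 w : A w = 0 -> w = 0.
  rewrite /A => Aw0.
  have := congr1 (fun m => dotM m w) Aw0; rewrite /= linear0l linearDl linearNl /=.
  rewrite laph_adjoint opprK linearZl_LR /= [dotM (const_mx 1) w]dotMC -expr2 => /eqP.
  rewrite paddr_eq0 ?dotS_ge0 ?sqr_ge0 // sqrf_eq0 => /andP[/eqP/dotS_eq0 gw0 /eqP w1].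
  apply/matrixP => i j.
  move: w1; rewrite (gradh_eq0_const gw0 i j) dotM_const_mx1 !mxE => /eqP.
  by rewrite mulrn_eq0 muln_eq0 orbb eqn0Ngt p_gt0 => /eqP.
have [u Au] := linear_inj_surj A_lin A_ker0 f.
(* Pairing [A u = f] with the constants gives [<u, 1> = 0], so [A u = - laph u]. *)
have := congr1 (fun m => dotM m (const_mx 1)) Au; rewrite /= f_mean0 linearDl linearNl /=.
rewrite dotM_divh_const oppr0 add0r linearZl_LR /= dotM_const_mx1.
move=> /eqP; rewrite mulf_eq0 pnatr_eq0 muln_eq0 orbb eqn0Ngt p_gt0 orbF => /eqP u0.
by exists u; rewrite -Au /= /A u0 scale0r addr0.
Qed.

Lemma resolvent_exists_unique (c : R) : 0 <= c ->
  forall f, exists! u, u - c *: laph u = f.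
Proof.
move=> c_ge0 f; pose B u := u - c *: laph u.
have B_lin : linear B.
  by move=> a u v; rewrite /B linearP; apply/matrixP => i j; rewrite !mxE /=; ring.
have B_ker0 w : B w = 0 -> w = 0.
  move=> Bw0; have := congr1 (fun m => dotM m w) Bw0.
  rewrite /= linear0l /B linearBl /= linearZl_LR /= laph_adjoint mulrN opprK => /eqP.
  by rewrite paddr_eq0 ?dotM_ge0 ?mulr_ge0 ?dotS_ge0 // => /andP[/eqP/dotM_eq0].
have [u Bu] := linear_inj_surj B_lin B_ker0 f.
exists u; split=> // v Bv; apply/eqP; rewrite -subr_eq0; apply/eqP/B_ker0.
by rewrite addrC -scaleN1r B_lin Bu [B v]Bv scaleN1r addNr.
Qed.

End GridCalculus.

Lemma bilinear_subr_expand (R : comNzRingType) (U : lmodType R)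
    (f : {bilinear U -> U -> R | *%R & *%R}) :
  (forall u v, f u v = f v u) -> forall a b c,
  f (a - c) (a - c) = f (a - b) (a - b) + f (b - c) (b - c) + 2 * f (a - b) (b - c).
Proof.
move=> fC a b c; have -> : a - c = (a - b) + (b - c) by rewrite addrA subrK.
move: (a - b) (b - c) => d e.
by rewrite linearDl !linearDr /= [f e d]fC; ring.
Qed.

Section Projection.
Variables (R : realType) (p N : nat).
Implicit Types x y z : ('I_N -> Sh R p) * 'M[R]_p.

Lemma addSE (s t : Sh R p) : addS s t = s + t. Proof. by []. Qed.

Lemma sqdistE x y : sqdist x y =
  \sum_k dotS (x.1 k - y.1 k) (x.1 k - y.1 k) + dotM (x.2 - y.2) (x.2 - y.2).
Proof. by []. Qed.

Lemma sqdist_ge0 x y : 0 <= sqdist x y.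
Proof. by rewrite addr_ge0 ?dotM_ge0 ?sumr_ge0 // => k _; apply: dotS_ge0. Qed.

Lemma sqdist_split x y z : sqdist x z = sqdist x y + sqdist y z +
  2 * (\sum_k dotS (x.1 k - y.1 k) (y.1 k - z.1 k) + dotM (x.2 - y.2) (y.2 - z.2)).
Proof.
rewrite !sqdistE (bilinear_subr_expand (@dotMC R p) _ y.2).
under eq_bigr => k _ do rewrite (bilinear_subr_expand (@dotSC R p) _ (y.1 k)).
by rewrite big_split /= big_split /= -mulr_sumr; ring.
Qed.

Lemma is_proj_Fh_normal (nus : 'I_N -> 'M[R]_p) x y (xi : 'I_N -> 'M[R]_p) :
  Fh nus y -> (forall k, y.1 k = x.1 k + gradh (xi k)) ->
  y.2 = x.2 + \sum_k xi k -> is_proj (Fh nus) x y.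
Proof.
move=> Fy y1 y2; split=> // z Fz; rewrite (sqdist_split x y z).
suff -> : \sum_k dotS (x.1 k - y.1 k) (y.1 k - z.1 k) + dotM (x.2 - y.2) (y.2 - z.2) = 0.
  by rewrite mulr0 addr0 lerDl sqdist_ge0.
have xy1 k : x.1 k - y.1 k = - gradh (xi k) by rewrite y1 opprD addNKr.
have xy2 : x.2 - y.2 = - \sum_k xi k by rewrite y2 opprD addNKr.
have div_yz k : divh (y.1 k - z.1 k) = y.2 - z.2.
  by rewrite linearB /= -(Fy k) -(Fz k) opprD addrACA subrr addr0.
under eq_bigr => k _ do
  rewrite xy1 linearNl /= dotSC -divh_adjoint div_yz.
by rewrite xy2 -linear_sumr linearNl /= dotMC subrr.
Qed.

End Projection.

Theorem proposition7p1 (R : realType) (p N : nat) (hp : (0 < p)%N)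
  (hN : (2 <= N)%N)
  (nus : 'I_N -> 'M[R]_p) (hnus : forall k, in_simplex (nus k))
  (sigma : 'I_N -> Sh R p) (nu : 'M[R]_p) (hnu : in_simplex nu) :
  (forall i : 'I_N, exists xi : 'M[R]_p,
      - laph xi = divh (sigma i) + nus i - nu)
  /\ (forall x : 'M[R]_p, exists! z : 'M[R]_p, z - N%:R^-1 *: laph z = x)
  /\ (forall xi' : 'I_N -> 'M[R]_p,
        (forall i, - laph (xi' i) = divh (sigma i) + nus i - nu) ->
        forall zeta : 'M[R]_p,
          zeta - N%:R^-1 *: laph zeta = N%:R^-1 *: \sum_(j < N) xi' j ->
          let xi := fun i => xi' i - zeta in
          is_proj (Fh nus) (sigma, nu)
            (fun i => addS (sigma i) (gradh (xi i)), nu + \sum_(i < N) xi i)).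
Proof.
have N_neq0 : N%:R != 0 :> R by rewrite pnatr_eq0 -lt0n (leq_trans _ hN).
split.
  move=> i; apply: neumann_poisson_solvable => //.
  by rewrite linearBl linearDl /= dotM_divh_const !dotM_simplex1 // add0r subrr.
split=> [x|xi' xi'_eq zeta zeta_eq xi].
  by apply: resolvent_exists_unique; rewrite invr_ge0 ler0n.
have sum_xi' : \sum_j xi' j = N%:R *: zeta - laph zeta.
  by rewrite -[LHS]scale1r -(mulfV N_neq0) -scalerA -zeta_eq scalerBr scalerA mulfV // scale1r.
have sum_xi : \sum_i xi i = - laph zeta.
  by rewrite sumrB sumr_const card_ord sum_xi' -scaler_nat addrAC subrr add0r.
apply: (is_proj_Fh_normal (xi := xi)) => //= k.
rewrite /= addSE linearD /= -/(laph (xi k)) linearB /= -[laph (xi' k)]opprK xi'_eq sum_xi.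
by apply/matrixP => i j; rewrite !mxE; ring.
Qed.
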